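(* Suppose Assumption 1 holds. Then for any level $\ell$ and $j\in\{\ell-1,\ell\}$, the marginal kernel $p_{\ell,j}$ is uniformly tight: for every $\epsilon>0$ there exists a compact set $K_\epsilon\in\mathcal{B}(\mathsf{X})$ such that $p_{\ell,j}(\theta,K_\epsilon)>1-\epsilon$ for all $\theta\in\mathsf{X}$.
   Context: Setting: $\mathsf{X}$ separable Banach space, prior probability measure $\mu_{\mathrm{pr}}$; posteriors $\mu^y_j$ with $\mu_{\mathrm{pr}}$-densities $\pi^y_j$; proposal density $Q_\ell$ w.r.t. $\mu_{\mathrm{pr}}$; $\alpha_j(\theta,z)=\min\{1,\frac{\pi^y_j(z)Q_\ell(\theta)}{\pi^y_j(\theta)Q_\ell(z)}\}$. Marginal kernel: $p_{\ell,j}(\theta,A)=\int_A\alpha_j(\theta,z)Q_\ell(z)\mu_{\mathrm{pr}}(\mathrm{d}z)+\mathbf 1_{\{\theta\in A\}}\int_\mathsf{X}(1-\alpha_j(\theta,z))Q_\ell(z)\mu_{\mathrm{pr}}(\mathrm{d}z)$. Assumption 1: (1.1) $Q_\ell$ continuous and positive; (1.2) each $\pi^y_j$ continuous and positive; (1.3) for $j=\ell-1,\ell$, all $c_r>0$, $\{\theta: Q_\ell(\theta)/\pi^y_j(\theta)\le c_r\}$ compact; (1.4) $\exists c\in(0,1)$ independent of $\ell$ with $\operatorname{ess\,inf}_z Q_\ell(z)/\pi^y_j(z)\ge c$; (1.5) $\exists r>1,C_r$ independent of $\ell$ with $\int Q_\ell^r\mathrm{d}\mu_{\mathrm{pr}}\le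 C_r$. *)

From HB Require Import structures.
From mathcomp Require Import all_boot all_order all_algebra.
From mathcomp Require Import all_classical all_reals all_analysis.
Set Implicit Arguments. Unset Strict Implicit. Unset Printing Implicit Defensive.
Import Order.TTheory GRing.Theory Num.Theory.
Import numFieldNormedType.Exports.
Local Open Scope classical_set_scope.
Local Open Scope ring_scope.

Definition borel_space {R : realType} (V : normedModType R) :=
  g_sigma_algebraType (@open V).

Definition separable_space (T : topologicalType) : Prop :=
  exists D : set T, countable D /\ closure D = setT.

(* Acceptance probability alpha_j(theta,z) for posterior density pi
   and independence proposal density Q (both w.r.t. the prior). *)
Definition accept_prob {R : realType} {T : Type} (pi Q : T -> R) (theta z : T) : R :=
  Num.min 1 ((pi z * Q theta) / (pi theta * Q z)).

Definition mh_kernel {R : realType} {d} {T : measurableType d}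
  (mu : {measure set T -> \bar R}) (pi Q : T -> R) (theta : T) (A : set T) : \bar R :=
  (\int[mu]_(z in A) (accept_prob pi Q theta z * Q z)%:E
   + (\1_A theta)%:E * \int[mu]_z ((1 - accept_prob pi Q theta z) * Q z)%:E)%E.

From HB Require Import structures.
From mathcomp Require Import all_boot all_order all_algebra.
From mathcomp Require Import all_classical all_reals all_analysis.
From mathcomp Require Import measurable_realfun ring.
Import Order.TTheory GRing.Theory Num.Theory.
Import numFieldNormedType.Exports.
Local Open Scope classical_set_scope.
Local Open Scope ring_scope.

(* The compact sets are the sublevel sets K_c = {Q / pi <= c} of (1.3).
   For every theta the kernel gives K_c at least the proposal mass
   \int_(K_c) Q dmu:
   - if theta lies in K_c, the rejection term contributes
     \int_(K_c) (1 - alpha) Q dmu and alpha Q + (1 - alpha) Q = Q;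
   - if theta lies outside K_c, every z in K_c has
     Q z / pi z <= c < Q theta / pi theta, so the move to z is accepted
     with probability alpha(theta, z) = 1.
   Since the sets K_(n+1) increase to the whole space and Q has total
   mass 1, monotone convergence makes \int_(K_(n+1)) Q dmu exceed 1 - eps
   for some n, uniformly in theta.  Only the positivity in (1.1)-(1.2),
   the compactness (1.3), and the normalisation and measurability of Q
   and pi are needed. *)

Definition ratio_sublevel {T : Type} {R : numFieldType} (Q pi : T -> R) (c : R) :
  set T := [set x | Q x / pi x <= c].

Lemma ratio_sublevel_nondecreasing {T : Type} {R : numFieldType} (Q pi : T -> R) :
  nondecreasing_seq (fun n : nat => ratio_sublevel Q pi n.+1%:R).
Proof.
move=> n m nm; apply/subsetPset => x; rewrite /ratio_sublevel /= => /le_trans.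
by apply; rewrite ler_nat.
Qed.

Lemma ratio_sublevel_cover {T : Type} {R : archiFieldType} (Q pi : T -> R) :
  \bigcup_n ratio_sublevel Q pi n.+1%:R = setT.
Proof.
apply/seteqP; split=> // x _; exists (Num.bound `|Q x / pi x|) => //.
rewrite /ratio_sublevel /= (le_trans (ler_norm _)) //.
by rewrite (le_trans (ltW (archi_boundP (normr_ge0 _)))) // ler_nat.
Qed.

Section mh_kernel_mass.
Context {d : measure_display} {T : measurableType d} {R : realType}.
Variables (mu : {measure set T -> \bar R}) (pi Q : T -> R).
Hypotheses (mpi : measurable_fun [set: T] pi) (mQ : measurable_fun [set: T] Q).
Hypotheses (pi_gt0 : forall x, 0 < pi x) (Q_gt0 : forall x, 0 < Q x).

Lemma accept_prob_ge0 theta z : 0 <= accept_prob pi Q theta z.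
Proof. by rewrite le_min ler01 divr_ge0 // ltW // mulr_gt0. Qed.

Lemma accept_prob_le1 theta z : accept_prob pi Q theta z <= 1.
Proof. by rewrite ge_min lexx. Qed.

(* Closed form of the accepted flux, which makes its measurability evident. *)
Lemma accept_probMQ theta z :
  accept_prob pi Q theta z * Q z = Num.min (Q z) (pi z * (Q theta / pi theta)).
Proof.
have Qz := Q_gt0 z; have pit := pi_gt0 theta.
have ratioQ : pi z * Q theta / (pi theta * Q z) * Q z = pi z * (Q theta / pi theta).
  by field; rewrite !gt_eqF.
rewrite /accept_prob !minEle -ratioQ ler_pMl //.
by case: ifPn => _; rewrite ?mul1r.
Qed.

Lemma measurable_accept_flux theta :
  measurable_fun [set: T] (fun z => accept_prob pi Q theta z * Q z).
Proof.
under eq_fun do rewrite accept_probMQ.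
by apply: measurable_minr => //; exact: measurable_funM.
Qed.

Lemma measurable_reject_flux theta :
  measurable_fun [set: T] (fun z => (1 - accept_prob pi Q theta z) * Q z).
Proof.
under eq_fun do rewrite mulrBl mul1r.
exact: measurable_funB (measurable_accept_flux theta).
Qed.

Lemma accept_prob_eq1 theta z :
  Q z / pi z <= Q theta / pi theta -> accept_prob pi Q theta z = 1.
Proof.
have Qz := Q_gt0 z; have piz := pi_gt0 z.
have Qt := Q_gt0 theta; have pit := pi_gt0 theta.
rewrite ler_pdivrMr // mulrAC ler_pdivlMr // => le_ratio.
by apply/min_l; rewrite ler_pdivlMr ?mulr_gt0 // mul1r mulrC [pi z * _]mulrC.
Qed.

Lemma mh_kernel_ge_mass_in (A : set T) theta : measurable A -> A theta ->
  (\int[mu]_(z in A) (Q z)%:E <= mh_kernel mu pi Q theta A)%E.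
Proof.
move=> mA Atheta; rewrite /mh_kernel indicE mem_set // mul1e.
have acc_ge0 z : 0 <= accept_prob pi Q theta z * Q z.
  by rewrite mulr_ge0 ?accept_prob_ge0 // ltW.
have rej_ge0 z : 0 <= (1 - accept_prob pi Q theta z) * Q z.
  by rewrite mulr_ge0 ?subr_ge0 ?accept_prob_le1 // ltW.
have splitQ : (\int[mu]_(z in A) (Q z)%:E =
    \int[mu]_(z in A) (accept_prob pi Q theta z * Q z)%:E +
     \int[mu]_(z in A) ((1 - accept_prob pi Q theta z) * Q z)%:E)%E.
  rewrite -ge0_integralD //; last 4 first.
  - by move=> z _; rewrite lee_fin.
  - by apply/measurable_funTS/measurable_EFinP; exact: measurable_accept_flux.
  - by move=> z _; rewrite lee_fin.
  - by apply/measurable_funTS/measurable_EFinP; exact: measurable_reject_flux.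
  by apply: eq_integral => z _; rewrite -EFinD mulrBl mul1r addrC subrK.
rewrite splitQ leeD2l //; apply: ge0_subset_integral => //.
- by apply/measurable_EFinP; exact: measurable_reject_flux.
- by move=> z _; rewrite lee_fin.
Qed.

Lemma mh_kernel_ge_mass_sublevel (c : R) theta :
  measurable (ratio_sublevel Q pi c) ->
  (\int[mu]_(z in ratio_sublevel Q pi c) (Q z)%:E <=
    mh_kernel mu pi Q theta (ratio_sublevel Q pi c))%E.
Proof.
set K := ratio_sublevel Q pi c => mK.
have [Ktheta|notKtheta] := pselect (K theta).
  exact: mh_kernel_ge_mass_in.
rewrite /mh_kernel indicE memNset // mul0e adde0.
suff -> : (\int[mu]_(z in K) (accept_prob pi Q theta z * Q z)%:E =
           \int[mu]_(z in K) (Q z)%:E)%E by [].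
apply: eq_integral => z; rewrite inE => Kz; rewrite accept_prob_eq1 ?mul1r //.
by apply: (le_trans Kz); apply/ltW; rewrite ltNge; exact/negP.
Qed.

End mh_kernel_mass.

Lemma exhaustion_integral_gt {d : measure_display} {T : measurableType d}
    {R : realType} (mu : {measure set T -> \bar R}) {F : (set T)^nat}
    {f : T -> R} {a : R} :
  nondecreasing_seq F -> (forall n, measurable (F n)) -> \bigcup_n F n = setT ->
  measurable_fun [set: T] f -> (forall x, 0 <= f x) ->
  (a%:E < \int[mu]_x (f x)%:E)%E ->
  exists n, (a%:E < \int[mu]_(x in F n) (f x)%:E)%E.
Proof.
move=> ndF mF coverF mf f_ge0 a_lt.
have mfF n : measurable_fun (F n) (EFin \o f).
  by apply/measurable_funTS/measurable_EFinP.
have f0 n x : F n x -> (0 <= (f x)%:E)%E by rewrite lee_fin.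
have nd : nondecreasing_seq (fun n => (\int[mu]_(x in F n) (f x)%:E)%E) :=
  ge0_nondecreasing_set_nondecreasing_integral mu ndF mF mfF f0.
have to_full := ge0_nondecreasing_set_cvg_integral (mu := mu) ndF mF mfF f0.
rewrite coverF in to_full.
have [y [n _ Fn_y] a_lt_y] :
    exists2 y, range (fun n => (\int[mu]_(x in F n) (f x)%:E)%E) y & (a%:E < y)%E.
  apply: ereal_sup_gt.
  by rewrite -(cvg_unique (@ereal_hausdorff R) to_full (ereal_nondecreasing_cvgn nd)).
by exists n; rewrite Fn_y.
Qed.

Lemma compact_borel {R : realType} {V : normedModType R} (A : set V) :
  compact A -> measurable (A : set (borel_space V)).
Proof.
move=> cA; have clA : closed A by apply: compact_closed.
rewrite -(setCK A); apply: measurableC.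
by apply: sub_sigma_algebra; exact: closed_openC.
Qed.

Theorem mainTheorem5 (R : realType) (V : completeNormedModType R)
  (mu : probability (borel_space V) R)
  (Q : nat -> V -> R) (post : nat -> V -> R) :
  separable_space V ->
  (* Q_l and pi_j are probability densities w.r.t. the prior *)
  (forall l, measurable_fun [set: borel_space V] (Q l : borel_space V -> R)) ->
  (forall l, (\int[mu]_z (Q l z)%:E = 1)%E) ->
  (forall j, measurable_fun [set: borel_space V] (post j : borel_space V -> R)) ->
  (forall j, (\int[mu]_z (post j z)%:E = 1)%E) ->
  (* (1.1) *)
  (forall l, continuous (Q l) /\ (forall x, 0 < Q l x)) ->
  (* (1.2) *)
  (forall j, continuous (post j) /\ (forall x, 0 < post j x)) ->
  (* (1.3) *)
  (forall l j, (j = l.-1 \/ j = l) -> forall cr : R, 0 < cr ->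
     compact [set x : V | Q l x / post j x <= cr]) ->
  (* (1.4) *)
  (exists c : R, 0 < c < 1 /\
     forall l j, (j = l.-1 \/ j = l) ->
       {ae mu, forall z : borel_space V, c <= Q l z / post j z}) ->
  (* (1.5) *)
  (exists r Cr : R, 1 < r /\
     forall l, (\int[mu]_z ((Q l z) `^ r)%:E <= Cr%:E)%E) ->
  forall l j, (j = l.-1 \/ j = l) ->
  forall eps : R, 0 < eps ->
  exists K : set V, compact K /\ measurable (K : set (borel_space V)) /\
    forall theta : V,
      ((1 - eps)%:E < mh_kernel mu (post j) (Q l) theta K)%E.
Proof.
move=> _ mQ intQ mpost _ Qprop postprop sublevel_compact _ _ l j hj eps eps_gt0.
have [_ Q_gt0] := Qprop l; have [_ post_gt0] := postprop j.
pose K (n : nat) := ratio_sublevel (Q l) (post j) n.+1%:R.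
have K_compact n : compact (K n) := sublevel_compact l j hj _ (ltr0Sn _ n).
have K_borel n : measurable (K n : set (borel_space V)) :=
  compact_borel _ (K_compact n).
have K_nd : nondecreasing_seq K := ratio_sublevel_nondecreasing (Q l) (post j).
have K_cover : \bigcup_n K n = setT := ratio_sublevel_cover (Q l) (post j).
have total_mass : ((1 - eps)%:E < \int[mu]_z (Q l z)%:E)%E.
  by rewrite intQ lte_fin gtrBl.
have [n mass_Kn] := exhaustion_integral_gt mu K_nd K_borel K_cover
  (mQ l) (fun x => ltW (Q_gt0 x)) total_mass.
exists (K n); split; [exact: K_compact | split; [exact: K_borel |]].
move=> theta; apply: (lt_le_trans mass_Kn).
exact: (mh_kernel_ge_mass_sublevel mu (post j) (Q l) (mpost j) (mQ l)
  post_gt0 Q_gt0 n.+1%:R theta (K_borel n)).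
Qed.
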